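(* Let $X$, $\mu$ be as in the context, under the standing assumptions. For $s\in\mathbb R$ and $r>0$ let $S_r(s)=\sup\sum_i\mu(B(x_i,r))^s$, where the supremum is over all families of pairwise disjoint closed balls $B(x_i,r)$ of radius $r$ with centers $x_i\in X$. Then for every $s\in\mathbb R$, $$\underline\tau_\mu(s):=\liminf_{r\to0}\frac{\log S_r(s)}{\log r}=\min\{\beta_1(s),\beta_2(s)\},\qquad \overline\tau_\mu(s):=\limsup_{r\to0}\frac{\log S_r(s)}{\log r}=\max\{\beta_1(s),\beta_2(s)\}.$$
   Context: Let $\mathcal A=\{0,1\}$. Fix real numbers $A>B>2$, real numbers $p,q$ with $0<p,q\le 1/2$, and a strictly increasing sequence of integers $\mathcal N=(N_i)_{i\ge 0}$ with $N_0=0$. For $n\ge 1$, call $n$ of type A if $N_{2i}<n\le N_{2i+1}$ for some $i\ge 0$, and of type B if $N_{2i+1}<n\le N_{2i+2}$ for some $i\ge0$; put $(r_n,\rho_n)=(A,p)$ if $n$ is of type A and $(r_n,\rho_n)=(B,q)$ if $n$ is of type B. Define closed intervals $I_w$, $w\in\mathcal A^n$, recursively: $I_\emptyset=[0,1]$, and if $w\in\mathcal A^{n-1}$ and $I_w=[x_w,x_w+\ell]$ then $I_{w0}=[x_w,x_w+\ell/r_n]$ and $I_{w1}=[x_w+\ell-\ell/r_n,\,x_w+\ell]$. Let $X=\bigcap_{n\ge1}\bigcup_{w\in\mathcal A^n}I_w$. Let $\mu$ be the unique Borel probability measure on $X$ with $\mu(I_\emptyset)=1$ and, for $w\in\mathcal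 A^{n-1}$, $\mu(I_{w0})=\rho_n\mu(I_w)$, $\mu(I_{w1})=(1-\rho_n)\mu(I_w)$. Standing assumptions: $\lim_{i\to\infty}N_{i+1}/N_i=\infty$ and $-\frac{\log p}{\log A}<-\frac{\log(1-q)}{\log B}$. Define $\beta_1(s)=-\frac{\log(p^s+(1-p)^s)}{\log A}$ and $\beta_2(s)=-\frac{\log(q^s+(1-q)^s)}{\log B}$. *)

From Stdlib Require Import Reals Lra Lia List Classical ClassicalEpsilon.
Import ListNotations.
Open Scope R_scope.

(** Generic supremum / infimum of a set of reals (chosen via Hilbert epsilon;
    meaningful when the set is nonempty and bounded). *)
Definition Rsup (P : R -> Prop) : R := epsilon (inhabits 0) (fun m => is_lub P m).
Definition Rinf (P : R -> Prop) : R := - Rsup (fun x => P (- x)).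

Definition typeA (N : nat -> nat) (n : nat) : Prop :=
  exists i : nat, (N (2 * i) < n <= N (2 * i + 1))%nat.

Definition ratio (A B : R) (N : nat -> nat) (n : nat) : R :=
  if excluded_middle_informative (typeA N n) then A else B.
Definition weight (p q : R) (N : nat -> nat) (n : nat) : R :=
  if excluded_middle_informative (typeA N n) then p else q.

(** Words of length n over {0,1} (false = 0, true = 1); the head of the list
    is the first letter (level 1). *)
Fixpoint words (n : nat) : list (list bool) :=
  match n with
  | O => [nil]
  | S n' => flat_map (fun w => [false :: w; true :: w]) (words n')
  end.

(** Interval I_w = [x, x + l], returned as the pair (x, l); the letters of w
    are processed at levels k, k+1, ... starting from interval [x, x+l]. *)
Fixpoint interval_aux (A B : R) (N : nat -> nat) (k : nat) (x l : R)
    (w : list bool) : R * R :=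
  match w with
  | nil => (x, l)
  | b :: w' =>
      let l' := l / ratio A B N k in
      interval_aux A B N (S k) (if b then x + l - l' else x) l' w'
  end.
Definition interval (A B : R) (N : nat -> nat) (w : list bool) : R * R :=
  interval_aux A B N 1 0 1 w.

Fixpoint mass_aux (p q : R) (N : nat -> nat) (k : nat) (w : list bool) : R :=
  match w with
  | nil => 1
  | b :: w' =>
      (if b then 1 - weight p q N k else weight p q N k) * mass_aux p q N (S k) w'
  end.
Definition mass (p q : R) (N : nat -> nat) (w : list bool) : R :=
  mass_aux p q N 1 w.

Definition inX (A B : R) (N : nat -> nat) (x : R) : Prop :=
  forall n : nat, exists w : list bool, length w = n /\
    fst (interval A B N w) <= x <= fst (interval A B N w) + snd (interval A B N w).

Definition ball_approx (A B p q : R) (N : nat -> nat) (n : nat) (c r : R) : R :=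
  fold_right Rplus 0
    (map (fun w =>
            let x := fst (interval A B N w) in
            let l := snd (interval A B N w) in
            if Rle_dec x (c + r) then
              if Rle_dec (c - r) (x + l) then mass p q N w else 0
            else 0)
         (words n)).

(** mu(B(c,r)): the level-n covers decrease to B(c,r) /\ X (a compact set),
    so mu(B(c,r)) is the infimum over n of their masses. *)
Definition mu_ball (A B p q : R) (N : nat -> nat) (c r : R) : R :=
  Rinf (fun v => exists n : nat, v = ball_approx A B p q N n c r).

(** S_r(s): sup over families of pairwise disjoint closed balls of radius r
    centred in X (such families are finite, given as lists of centres). *)
Definition S_r (A B p q : R) (N : nat -> nat) (r s : R) : R :=
  Rsup (fun v => exists cs : list R,
          (forall c, In c cs -> inX A B N c) /\
          ForallOrdPairs (fun x y => 2 * r < Rabs (x - y)) cs /\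
          v = fold_right Rplus 0 (map (fun c => Rpower (mu_ball A B p q N c r) s) cs)).

Definition is_liminf0 (f : R -> R) (L : R) : Prop :=
  (forall eps, 0 < eps -> exists delta, 0 < delta /\
      forall r, 0 < r < delta -> L - eps < f r) /\
  (forall eps, 0 < eps -> forall delta, 0 < delta ->
      exists r, 0 < r < delta /\ f r < L + eps).
Definition is_limsup0 (f : R -> R) (L : R) : Prop :=
  (forall eps, 0 < eps -> exists delta, 0 < delta /\
      forall r, 0 < r < delta -> f r < L + eps) /\
  (forall eps, 0 < eps -> forall delta, 0 < delta ->
      exists r, 0 < r < delta /\ L - eps < f r).

Definition beta (r rho s : R) : R :=
  - ln (Rpower rho s + Rpower (1 - rho) s) / ln r.

From Stdlib Require Import Reals Lra Lia List Bool Classical ClassicalEpsilon.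
Import ListNotations.
Open Scope R_scope.

(* Let ell n be the common length of the level-n intervals and
   Z_n(s) = sum_(|w| = n) mu(I_w)^s = prod_(k <= n) (rho_k^s + (1 - rho_k)^s).
   Distinct level-n intervals are (B - 2) ell n apart.  Fix a depth D with B^-D small; when
   ell (n + D) <= r < (B - 2)/2 * ell n, every r-ball centred in X has measure within a factor
   min(p,q)^D of the level-(n + D) interval containing its centre and of its level-n ancestor.
   Centring balls at the left endpoints of the level-n intervals gives S_r(s) >= c Z_n(s);
   sending the centres of any packing to their level-(n + D) intervals, which are pairwise
   distinct, gives S_r(s) <= C Z_(n+D)(s).  Hence
     log S_r(s) / log r = sum_k beta_k log r_k / sum_k log r_k + O(1 / |log r|),
   where beta_k is beta_1(s) at levels of type A and beta_2(s) at levels of type B: a weighted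
   average of beta_1 and beta_2.  Since N_(i+1) / N_i -> oo, some levels n end runs of type A,
   or of type B, covering all but a vanishing proportion of 1..n, and there the average tends
   to beta_1, resp. beta_2. *)

Lemma exp_le_mono x y : x <= y -> exp x <= exp y.
Proof. intros [H|<-]; [left; now apply exp_increasing | lra]. Qed.

Lemma ln_le_mono x y : 0 < x -> x <= y -> ln x <= ln y.
Proof. intros Hx [H|<-]; [left; now apply ln_increasing | lra]. Qed.

Lemma ln_pos x : 1 < x -> 0 < ln x.
Proof. intros H; rewrite <- ln_1; apply ln_increasing; lra. Qed.

Lemma ln_neg x : 0 < x < 1 -> ln x < 0.
Proof. intros H; rewrite <- ln_1; apply ln_increasing; lra. Qed.

Lemma Rabs_le_between x a : Rabs x <= a <-> - a <= x <= a.
Proof. split_Rabs; split; intros; lra. Qed.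

Lemma Rabs_le_of_between x a b : Rmin a b <= x <= Rmax a b -> Rabs x <= Rabs a + Rabs b.
Proof. unfold Rmin, Rmax; destruct Rle_dec; split_Rabs; lra. Qed.

Lemma Rdiv_le_of_le_mul a b c : 0 < c -> a <= b * c -> a / c <= b.
Proof.
  intros Hc H; apply Rmult_le_reg_r with c; auto.
  unfold Rdiv; rewrite Rmult_assoc, Rinv_l; lra.
Qed.

Lemma Rle_div_of_mul_le a b c : 0 < c -> b * c <= a -> b <= a / c.
Proof.
  intros Hc H; apply Rmult_le_reg_r with c; auto.
  unfold Rdiv; rewrite Rmult_assoc, Rinv_l; lra.
Qed.

Lemma Rpower_le_of_ln_close x y L s : 0 < x -> 0 < y -> Rabs (ln x - ln y) <= L ->
  Rpower x s <= exp (Rabs s * L) * Rpower y s.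
Proof.
  intros Hx Hy H; unfold Rpower; rewrite <- exp_plus; apply exp_le_mono.
  assert (Hs : Rabs (s * ln x - s * ln y) <= Rabs s * L).
  { rewrite <- Rmult_minus_distr_l, Rabs_mult; apply Rmult_le_compat_l; auto using Rabs_pos. }
  apply Rabs_le_between in Hs; lra.
Qed.

Lemma quotient_close X Y a b m K0 K1 : 0 < Y -> a = m * b ->
  Rabs (X - a) <= K0 -> Rabs (Y - b) <= K1 -> Rabs (X / Y - m) <= (K0 + Rabs m * K1) / Y.
Proof.
  intros HY -> H0 H1.
  replace (X / Y - m) with ((X - m * b - m * (Y - b)) / Y) by (field; lra).
  unfold Rdiv; rewrite Rabs_mult, Rabs_inv, (Rabs_pos_eq Y) by lra.
  apply Rmult_le_compat_r; [apply Rlt_le, Rinv_0_lt_compat; lra|].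
  eapply Rle_trans; [apply Rabs_triang|]; rewrite Rabs_Ropp, Rabs_mult.
  pose proof (Rmult_le_compat_l _ _ _ (Rabs_pos m) H1); lra.
Qed.

Lemma div_neg_ln_lt E eps r : 0 < eps -> 0 < r < exp (- ((Rabs E + 1) / eps)) -> E / - ln r < eps.
Proof.
  intros Heps [Hr0 Hr]; apply ln_increasing in Hr; auto; rewrite ln_exp in Hr.
  assert (Hpos : 0 < (Rabs E + 1) / eps) by (apply Rdiv_lt_0_compat; pose proof (Rabs_pos E); lra).
  assert (Hmul : Rabs E + 1 <= eps * - ln r).
  { replace (Rabs E + 1) with (eps * ((Rabs E + 1) / eps)) by (field; lra).
    apply Rmult_le_compat_l; lra. }
  apply Rle_lt_trans with (eps - / - ln r).
  - apply Rdiv_le_of_le_mul; [lra|]; rewrite Rmult_minus_distr_r, Rinv_l by lra.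
    pose proof (Rle_abs E); lra.
  - pose proof (Rinv_0_lt_compat (- ln r) ltac:(lra)); lra.
Qed.

Lemma exists_depth B c : 1 < B -> 0 < c -> exists D : nat, exp (- INR D * ln B) <= c.
Proof.
  intros HB Hc; pose proof (ln_pos B HB).
  destruct (INR_unbounded (- ln c / ln B)) as [D HD]; exists D.
  rewrite <- (exp_ln c) by lra; apply exp_le_mono.
  apply Rmult_lt_compat_r with (r := ln B) in HD; auto.
  unfold Rdiv in HD; rewrite Rmult_assoc, Rinv_l in HD; lra.
Qed.

Lemma liminf_limsup_of_bounds (f : R -> R) lo hi :
  (forall eps, 0 < eps -> exists delta, 0 < delta /\ forall r, 0 < r < delta ->
     lo - eps < f r < hi + eps) ->
  (forall eps, 0 < eps -> forall delta, 0 < delta ->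
     exists r, 0 < r < delta /\ Rabs (f r - lo) < eps) ->
  (forall eps, 0 < eps -> forall delta, 0 < delta ->
     exists r, 0 < r < delta /\ Rabs (f r - hi) < eps) ->
  is_liminf0 f lo /\ is_limsup0 f hi.
Proof.
  intros Hb Hlo Hhi; repeat split.
  - intros eps Heps; destruct (Hb eps Heps) as [d [Hd H]]; exists d; split; auto.
    intros r Hr; apply H, Hr.
  - intros eps Heps d Hd; destruct (Hlo eps Heps d Hd) as [r [Hr H]].
    apply Rabs_def2 in H; exists r; split; [auto | lra].
  - intros eps Heps; destruct (Hb eps Heps) as [d [Hd H]]; exists d; split; auto.
    intros r Hr; apply H, Hr.
  - intros eps Heps d Hd; destruct (Hhi eps Heps d Hd) as [r [Hr H]].
    apply Rabs_def2 in H; exists r; split; [auto | lra].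
Qed.

Lemma Rsup_is_lub (P : R -> Prop) :
  (exists x, P x) -> (exists M, forall x, P x -> x <= M) -> is_lub P (Rsup P).
Proof.
  intros [x Hx] [M HM]; unfold Rsup; apply epsilon_spec.
  destruct (completeness P) as [m Hm]; [now exists M | now exists x | now exists m].
Qed.

Lemma Rsup_le (P : R -> Prop) M :
  (exists x, P x) -> (forall x, P x -> x <= M) -> Rsup P <= M.
Proof. intros Hne HM; apply (Rsup_is_lub P Hne (ex_intro _ M HM)); exact HM. Qed.

Lemma Rsup_ge (P : R -> Prop) v :
  P v -> (exists M, forall x, P x -> x <= M) -> v <= Rsup P.
Proof. intros Hv HM; now apply (Rsup_is_lub P (ex_intro _ v Hv) HM). Qed.

Lemma Rinf_ge (P : R -> Prop) m :
  (exists x, P x) -> (forall x, P x -> m <= x) -> m <= Rinf P.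
Proof.
  intros [x Hx] Hm; unfold Rinf.
  enough (Rsup (fun y => P (- y)) <= - m) by lra.
  apply Rsup_le; [exists (- x); now rewrite Ropp_involutive |].
  intros y Hy; specialize (Hm _ Hy); lra.
Qed.

Lemma Rinf_le (P : R -> Prop) v m :
  P v -> (forall x, P x -> m <= x) -> Rinf P <= v.
Proof.
  intros Hv Hm; unfold Rinf.
  enough (- v <= Rsup (fun y => P (- y))) by lra.
  apply Rsup_ge; [now rewrite Ropp_involutive |].
  exists (- m); intros y Hy; specialize (Hm _ Hy); lra.
Qed.

Fixpoint sum_list {T} (f : T -> R) (l : list T) : R :=
  match l with [] => 0 | a :: l' => f a + sum_list f l' end.

Lemma sum_list_fold {T} (f : T -> R) l : fold_right Rplus 0 (map f l) = sum_list f l.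
Proof. induction l as [|a l IH]; simpl; congruence. Qed.

Lemma sum_list_app {T} (f : T -> R) l1 l2 :
  sum_list f (l1 ++ l2) = sum_list f l1 + sum_list f l2.
Proof. induction l1 as [|a l IH]; simpl; rewrite ?IH; lra. Qed.

Lemma sum_list_map {T U} (f : U -> R) (g : T -> U) l :
  sum_list f (map g l) = sum_list (fun x => f (g x)) l.
Proof. induction l as [|a l IH]; simpl; congruence. Qed.

Lemma sum_list_le {T} (f g : T -> R) l :
  (forall x, In x l -> f x <= g x) -> sum_list f l <= sum_list g l.
Proof.
  induction l as [|a l IH]; simpl; intros H; [lra|].
  apply Rplus_le_compat; auto.
Qed.

Lemma sum_list_ext {T} (f g : T -> R) l :
  (forall x, In x l -> f x = g x) -> sum_list f l = sum_list g l.
Proof. intros H; apply Rle_antisym; apply sum_list_le; intros x Hx; rewrite H; auto; lra. Qed.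

Lemma sum_list_nonneg {T} (f : T -> R) l :
  (forall x, In x l -> 0 <= f x) -> 0 <= sum_list f l.
Proof.
  induction l as [|a l IH]; simpl; intros H; [lra|].
  assert (0 <= f a) by auto; assert (0 <= sum_list f l) by auto; lra.
Qed.

Lemma sum_list_scal {T} (f : T -> R) c l :
  sum_list (fun x => c * f x) l = c * sum_list f l.
Proof. induction l as [|a l IH]; simpl; rewrite ?IH; ring. Qed.

Lemma sum_list_plus {T} (f g : T -> R) l :
  sum_list (fun x => f x + g x) l = sum_list f l + sum_list g l.
Proof. induction l as [|a l IH]; simpl; rewrite ?IH; ring. Qed.

Lemma sum_list_In_le {T} (f : T -> R) l a :
  (forall x, In x l -> 0 <= f x) -> In a l -> f a <= sum_list f l.
Proof.
  intros H Ha; apply in_split in Ha as [l1 [l2 ->]].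
  rewrite sum_list_app; simpl.
  assert (0 <= sum_list f l1) by (apply sum_list_nonneg; intros; apply H, in_or_app; auto).
  assert (0 <= sum_list f l2) by (apply sum_list_nonneg; intros; apply H, in_or_app; simpl; auto).
  lra.
Qed.

Lemma sum_list_incl {T} (f : T -> R) l L :
  NoDup l -> incl l L -> (forall x, In x L -> 0 <= f x) -> sum_list f l <= sum_list f L.
Proof.
  revert l; induction L as [|b L IH]; intros l Hl Hincl Hf.
  - destruct l as [|a l]; [simpl; lra | destruct (Hincl a (or_introl eq_refl))].
  - simpl; assert (0 <= f b) by (apply Hf; left; auto).
    destruct (classic (In b l)) as [Hb|Hb].
    + apply in_split in Hb as [l1 [l2 ->]].
      apply NoDup_remove in Hl as [Hl Hnot].
      rewrite sum_list_app; simpl; rewrite <- Rplus_assoc, (Rplus_comm _ (f b)), Rplus_assoc.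
      rewrite <- sum_list_app; apply Rplus_le_compat_l, IH; auto.
      * intros x Hx; destruct (Hincl x) as [<-|]; auto; [|tauto].
        apply in_app_or in Hx as [|]; apply in_or_app; simpl; auto.
      * intros x Hx; apply Hf; simpl; auto.
    + enough (sum_list f l <= sum_list f L) by lra.
      apply IH; auto.
      * intros x Hx; destruct (Hincl x Hx) as [<-|]; tauto.
      * intros x Hx; apply Hf; simpl; auto.
Qed.

Lemma sum_list_single {T} (f : T -> R) l u :
  NoDup l -> (forall x, In x l -> x <> u -> f x = 0) -> 0 <= f u -> sum_list f l <= f u.
Proof.
  intros Hl; induction Hl as [|a l Ha Hl IH]; simpl; intros H Hu; [lra|].
  destruct (classic (a = u)) as [<-|Hne].
  - enough (sum_list f l <= 0) by lra.
    rewrite (sum_list_ext f (fun x => 0 * f x)), sum_list_scal; [lra|].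
    intros x Hx; rewrite H; simpl; auto; [ring | intros ->; contradiction].
  - rewrite H by (simpl; auto); enough (sum_list f l <= f u) by lra.
    apply IH; auto; intros x Hx; apply H; simpl; auto.
Qed.

Lemma NoDup_map_ForallOrdPairs {T U} (Rel : T -> T -> Prop) (f : T -> U) l :
  ForallOrdPairs Rel l -> (forall x y, In x l -> In y l -> Rel x y -> f x <> f y) ->
  NoDup (map f l).
Proof.
  intros Hl; induction Hl as [|a l Ha Hl IH]; intros H; simpl; constructor.
  - intros Hin; apply in_map_iff in Hin as [y [Hy Hyl]]; rewrite Forall_forall in Ha.
    apply (H a y); simpl; auto.
  - apply IH; intros; apply H; simpl; auto.
Qed.

Lemma ForallOrdPairs_map {T U} (Rel : U -> U -> Prop) (f : T -> U) l :
  NoDup l -> (forall x y, In x l -> In y l -> x <> y -> Rel (f x) (f y)) ->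
  ForallOrdPairs Rel (map f l).
Proof.
  intros Hl; induction Hl as [|a l Ha Hl IH]; intros H; simpl; constructor.
  - apply Forall_forall; intros y Hy; apply in_map_iff in Hy as [x [<- Hx]].
    apply H; simpl; auto; intros ->; contradiction.
  - apply IH; intros x y Hx Hy; apply H; simpl; auto.
Qed.

Lemma In_words n w : In w (words n) <-> length w = n.
Proof.
  revert w; induction n as [|n IH]; intros w; simpl.
  - split; [intros [<-|[]]; reflexivity | destruct w; [auto | discriminate]].
  - rewrite in_flat_map; split.
    + intros [u [Hu [<-|[<-|[]]]]]; simpl; f_equal; now apply IH.
    + destruct w as [|b u]; [discriminate|]; intros [= Hu].
      exists u; split; [now apply IH | destruct b; simpl; auto].
Qed.

Lemma NoDup_words n : NoDup (words n).
Proof.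
  induction n as [|n IH]; simpl; [repeat constructor; simpl; tauto|].
  induction IH as [|w l Hw Hl IHl]; simpl; [constructor|].
  assert (Hnot : forall b, ~ In (b :: w) (flat_map (fun u => [false :: u; true :: u]) l)).
  { intros b Hin; apply in_flat_map in Hin as [u [Hu [E|[E|[]]]]];
      injection E; intros; subst; contradiction. }
  constructor; [intros [E|E]; [discriminate | exact (Hnot _ E)]|].
  constructor; [exact (Hnot _) | exact IHl].
Qed.

Lemma sum_words_S (f : list bool -> R) n :
  sum_list f (words (S n)) = sum_list (fun w => f (false :: w) + f (true :: w)) (words n).
Proof.
  simpl; induction (words n) as [|w l IH]; simpl; rewrite ?IH; ring.
Qed.

Lemma sum_words_add (F : list bool -> R) n m :
  sum_list F (words (n + m)) =
  sum_list (fun u => sum_list (fun v => F (u ++ v)) (words m)) (words n).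
Proof.
  revert F; induction n as [|n IH]; intros F; simpl plus.
  - simpl; rewrite Rplus_0_r; reflexivity.
  - rewrite !sum_words_S, sum_list_plus.
    rewrite (IH (fun w => F (false :: w))), (IH (fun w => F (true :: w))).
    rewrite <- sum_list_plus; reflexivity.
Qed.

Fixpoint sum_from (f : nat -> R) (k n : nat) : R :=
  match n with O => 0 | S n' => f k + sum_from f (S k) n' end.

Lemma sum_from_add f k n m : sum_from f k (n + m) = sum_from f k n + sum_from f (k + n) m.
Proof.
  revert k; induction n as [|n IH]; intros k; simpl.
  - rewrite Nat.add_0_r; ring.
  - rewrite IH; replace (k + S n)%nat with (S k + n)%nat by lia; ring.
Qed.

Lemma sum_from_ext f g k n : (forall j, f j = g j) -> sum_from f k n = sum_from g k n.
Proof. intros H; revert k; induction n as [|n IH]; intros k; simpl; rewrite ?H, ?IH; auto. Qed.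

Lemma sum_from_opp f k n : sum_from (fun j => - f j) k n = - sum_from f k n.
Proof. revert k; induction n as [|n IH]; intros k; simpl; rewrite ?IH; ring. Qed.

Lemma sum_from_bounds f lo hi k n :
  (forall j, lo <= f j <= hi) -> INR n * lo <= sum_from f k n <= INR n * hi.
Proof.
  intros H; revert k; induction n as [|n IH]; intros k; simpl sum_from; [simpl; lra|].
  rewrite S_INR; specialize (IH (S k)); specialize (H k); lra.
Qed.

Lemma sum_from_weighted f g lo hi k n :
  (forall j, lo * g j <= f j <= hi * g j) ->
  lo * sum_from g k n <= sum_from f k n <= hi * sum_from g k n.
Proof.
  intros H; revert k; induction n as [|n IH]; intros k; simpl; [lra|].
  specialize (IH (S k)); specialize (H k); lra.
Qed.

Lemma sum_from_tail f g t C k m n : (m <= n)%nat ->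
  (forall j, Rabs (f j - t * g j) <= C) -> (forall j, (k + m <= j < k + n)%nat -> f j = t * g j) ->
  Rabs (sum_from f k n - t * sum_from g k n) <= INR m * C.
Proof.
  intros Hmn HC; revert k n Hmn; induction m as [|m IH]; intros k n Hmn Heq.
  - replace (sum_from f k n - t * sum_from g k n) with 0; [rewrite Rabs_R0; simpl; lra|].
    clear Hmn; revert k Heq; induction n as [|n IHn]; intros k Heq; simpl; [ring|].
    specialize (IHn (S k) ltac:(intros; apply Heq; lia)).
    rewrite (Heq k) by lia; lra.
  - destruct n as [|n]; [lia|]; simpl sum_from; rewrite S_INR.
    specialize (IH (S k) n ltac:(lia) ltac:(intros j Hj; apply Heq; lia)).
    specialize (HC k); revert IH HC; split_Rabs; lra.
Qed.

Lemma last_before (P : nat -> Prop) a m :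
  (a <= m)%nat -> P a -> ~ P m -> exists n, (a <= n)%nat /\ P n /\ ~ P (S n).
Proof.
  intros Ham Ha; induction m as [|m IH]; intros Hm.
  - replace a with 0%nat in Ha by lia; contradiction.
  - destruct (Nat.eq_dec a (S m)) as [->|Hne]; [contradiction|].
    destruct (classic (P m)) as [Hp|Hp]; [exists m; split; [lia | auto] | apply IH; auto; lia].
Qed.

(** * Long runs of levels of one type *)

Definition long_runs (P : nat -> Prop) : Prop :=
  forall M, exists m n, (m <= n)%nat /\ M <= INR n /\ M * INR m <= INR n /\
    forall k, (m < k <= n)%nat -> P k.

Lemma long_runs_impl (P Q : nat -> Prop) : (forall k, P k -> Q k) -> long_runs P -> long_runs Q.
Proof.
  intros HPQ HP M; destruct (HP M) as [m [n [H1 [H2 [H3 H4]]]]].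
  exists m, n; repeat split; auto.
Qed.

Section Gaps.

Variable N : nat -> nat.

Hypotheses (hNinc : forall i, (N i < N (S i))%nat)
  (hNgrowth : cv_infty (fun i => INR (N (S i)) / INR (N i))).

Lemma N_le_mono i j : (i <= j)%nat -> (N i <= N j)%nat.
Proof. intros Hij; induction Hij as [|j Hij IH]; [lia | specialize (hNinc j); lia]. Qed.

Lemma N_ge_index i : (i <= N i)%nat.
Proof. induction i as [|i IH]; [lia | specialize (hNinc i); lia]. Qed.

Lemma long_gaps (P : nat -> Prop) : (forall I, exists i, (I <= i)%nat /\ P i) ->
  forall M, exists i, P i /\ M <= INR (N (S i)) /\ M * INR (N i) <= INR (N (S i)).
Proof.
  intros HP M.
  destruct (hNgrowth M) as [I HI]; destruct (INR_unbounded M) as [c Hc].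
  destruct (HP (I + c + 1)%nat) as [i [Hi Pi]]; exists i; split; [exact Pi|].
  pose proof (N_ge_index (S i)); pose proof (N_ge_index i).
  split.
  - apply Rlt_le; eapply Rlt_le_trans; [apply Hc | apply le_INR; lia].
  - specialize (HI i ltac:(lia)); assert (0 < INR (N i)) by (apply lt_0_INR; lia).
    apply (Rmult_lt_compat_r (INR (N i))) in HI; auto.
    unfold Rdiv in HI; rewrite Rmult_assoc, Rinv_l, Rmult_1_r in HI by lra; lra.
Qed.

Lemma typeA_runs : long_runs (typeA N).
Proof.
  intros M; destruct (long_gaps (fun i => exists j, i = (2 * j)%nat)) with (M := M)
    as [i [[j ->] [H1 H2]]].
  { intros I; exists (2 * I)%nat; split; [lia | now exists I]. }
  exists (N (2 * j)%nat), (N (S (2 * j))); pose proof (hNinc (2 * j)%nat).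
  repeat split; auto; [lia|]; intros k Hk; exists j; rewrite Nat.add_1_r; lia.
Qed.

Lemma not_typeA_runs : long_runs (fun k => ~ typeA N k).
Proof.
  intros M; destruct (long_gaps (fun i => exists j, i = (2 * j + 1)%nat)) with (M := M)
    as [i [[j ->] [H1 H2]]].
  { intros I; exists (2 * I + 1)%nat; split; [lia | now exists I]. }
  exists (N (2 * j + 1)%nat), (N (S (2 * j + 1))); pose proof (hNinc (2 * j + 1)%nat).
  repeat split; auto; [lia|]; intros k Hk [j' Hj'].
  destruct (Nat.le_gt_cases j' j).
  - pose proof (N_le_mono (2 * j' + 1) (2 * j + 1) ltac:(lia)); lia.
  - pose proof (N_le_mono (S (2 * j + 1)) (2 * j') ltac:(lia)); lia.
Qed.

End Gaps.

(** * Intervals and masses of words *)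

Section Cantor.

Variables (A B p q : R) (N : nat -> nat).

Hypotheses (hB : 2 < B) (hAB : B < A) (hp : 0 < p <= 1 / 2) (hq : 0 < q <= 1 / 2).

Lemma level_cases k :
  (ratio A B N k = A /\ weight p q N k = p /\ typeA N k) \/
  (ratio A B N k = B /\ weight p q N k = q /\ ~ typeA N k).
Proof. unfold ratio, weight; destruct excluded_middle_informative; auto. Qed.

Lemma ratio_bounds k : B <= ratio A B N k <= A.
Proof. destruct (level_cases k) as [[-> _]|[-> _]]; lra. Qed.

Lemma weight_bounds k : Rmin p q <= weight p q N k <= 1 / 2.
Proof.
  pose proof (Rmin_l p q); pose proof (Rmin_r p q).
  destruct (level_cases k) as [[_ [-> _]]|[_ [-> _]]]; lra.
Qed.

Lemma Rmin_weights_pos : 0 < Rmin p q.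
Proof. apply Rmin_glb_lt; lra. Qed.

Lemma ln_B_pos : 0 < ln B.
Proof. apply ln_pos; lra. Qed.

Lemma ln_A_pos : 0 < ln A.
Proof. apply ln_pos; lra. Qed.

Definition log_ratio (k : nat) : R := ln (ratio A B N k).

Lemma log_ratio_bounds k : ln B <= log_ratio k <= ln A.
Proof. destruct (ratio_bounds k); split; apply ln_le_mono; lra. Qed.

Lemma log_ratio_pos k : 0 < log_ratio k.
Proof. pose proof ln_B_pos; pose proof (log_ratio_bounds k); lra. Qed.

Definition ell (n : nat) : R := exp (- sum_from log_ratio 1 n).

Lemma ell_pos n : 0 < ell n.
Proof. apply exp_pos. Qed.

Lemma ell_0 : ell 0 = 1.
Proof. unfold ell; simpl; rewrite Ropp_0; apply exp_0. Qed.

Lemma ell_add_le n m : ell (n + m) <= ell n * exp (- INR m * ln B).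
Proof.
  unfold ell; rewrite sum_from_add, <- exp_plus; apply exp_le_mono.
  destruct (sum_from_bounds log_ratio (ln B) (ln A) (1 + n) m log_ratio_bounds); lra.
Qed.

Lemma ell_add_ge n m : ell n * exp (- INR m * ln A) <= ell (n + m).
Proof.
  unfold ell; rewrite sum_from_add, <- exp_plus; apply exp_le_mono.
  destruct (sum_from_bounds log_ratio (ln B) (ln A) (1 + n) m log_ratio_bounds); lra.
Qed.

Lemma interval_aux_length k x l w :
  snd (interval_aux A B N k x l w) = l * exp (- sum_from log_ratio k (length w)).
Proof.
  revert k x l; induction w as [|b w IH]; intros k x l; simpl.
  - rewrite Ropp_0, exp_0; ring.
  - rewrite IH, Ropp_plus_distr, exp_plus; unfold log_ratio.
    rewrite (exp_Ropp (ln _)), exp_ln by (pose proof (ratio_bounds k); lra).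
    unfold Rdiv; ring.
Qed.

Lemma interval_aux_app k x l u v :
  interval_aux A B N k x l (u ++ v) =
  interval_aux A B N (k + length u) (fst (interval_aux A B N k x l u))
    (snd (interval_aux A B N k x l u)) v.
Proof.
  revert k x l; induction u as [|b u IH]; intros k x l; simpl.
  - now rewrite Nat.add_0_r.
  - now rewrite IH, <- plus_n_Sm.
Qed.

Lemma interval_aux_nested k x l w : 0 < l ->
  x <= fst (interval_aux A B N k x l w) /\
  fst (interval_aux A B N k x l w) + snd (interval_aux A B N k x l w) <= x + l.
Proof.
  revert k x l; induction w as [|b w IH]; intros k x l Hl; simpl; [lra|].
  pose proof (ratio_bounds k) as Hk.
  set (l' := l / ratio A B N k).
  assert (Hl' : 0 < l') by (apply Rdiv_lt_0_compat; lra).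
  assert (l = ratio A B N k * l') by (unfold l'; field; lra).
  destruct b; [destruct (IH (S k) (x + l - l') l' Hl') | destruct (IH (S k) x l' Hl')]; nra.
Qed.

Lemma interval_aux_zeros k x l j : fst (interval_aux A B N k x l (repeat false j)) = x.
Proof. revert k x l; induction j as [|j IH]; intros; simpl; auto. Qed.

Lemma interval_aux_gap k x l u v : 0 < l -> length u = length v -> u <> v ->
  fst (interval_aux A B N k x l u) + (B - 1) * snd (interval_aux A B N k x l u)
    <= fst (interval_aux A B N k x l v) \/
  fst (interval_aux A B N k x l v) + (B - 1) * snd (interval_aux A B N k x l v)
    <= fst (interval_aux A B N k x l u).
Proof.
  revert k x l v; induction u as [|a u IH]; intros k x l v Hl Hlen Huv;
    destruct v as [|b v]; try discriminate; [contradiction|].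
  injection Hlen; intros Hlen'; simpl.
  pose proof (ratio_bounds k) as Hk.
  set (l' := l / ratio A B N k).
  assert (Hl' : 0 < l') by (apply Rdiv_lt_0_compat; lra).
  assert (l = ratio A B N k * l') by (unfold l'; field; lra).
  destruct (bool_dec a b) as [<-|Hab].
  - apply IH; auto; intros <-; now apply Huv.
  - destruct (interval_aux_nested (S k) (if a then x + l - l' else x) l' u Hl').
    destruct (interval_aux_nested (S k) (if b then x + l - l' else x) l' v Hl').
    destruct a, b; try contradiction; [right | left]; nra.
Qed.

Lemma interval_length w : snd (interval A B N w) = ell (length w).
Proof. unfold interval, ell; rewrite interval_aux_length; ring. Qed.

Lemma interval_length_pos w : 0 < snd (interval A B N w).
Proof. rewrite interval_length; apply exp_pos. Qed.

Lemma interval_nested u v :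
  fst (interval A B N u) <= fst (interval A B N (u ++ v)) /\
  fst (interval A B N (u ++ v)) + snd (interval A B N (u ++ v))
    <= fst (interval A B N u) + snd (interval A B N u).
Proof.
  unfold interval; rewrite interval_aux_app.
  apply interval_aux_nested, (interval_length_pos u).
Qed.

Lemma interval_zeros w j : fst (interval A B N (w ++ repeat false j)) = fst (interval A B N w).
Proof. unfold interval at 1; rewrite interval_aux_app; apply interval_aux_zeros. Qed.

Lemma interval_gap u v : length u = length v -> u <> v ->
  fst (interval A B N u) + (B - 1) * ell (length u) <= fst (interval A B N v) \/
  fst (interval A B N v) + (B - 1) * ell (length u) <= fst (interval A B N u).
Proof.
  intros Hlen Huv.
  assert (Hu := interval_length u); assert (Hv := interval_length v); rewrite <- Hlen in Hv.
  destruct (interval_aux_gap 1 0 1 u v ltac:(lra) Hlen Huv); unfold interval in *; nra.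
Qed.

Definition in_interval (w : list bool) (c : R) : Prop :=
  fst (interval A B N w) <= c <= fst (interval A B N w) + snd (interval A B N w).

Lemma in_interval_prefix u v c : in_interval (u ++ v) c -> in_interval u c.
Proof. unfold in_interval; destruct (interval_nested u v); lra. Qed.

Lemma in_interval_firstn n w c : in_interval w c -> in_interval (firstn n w) c.
Proof. rewrite <- (firstn_skipn n w) at 1; apply in_interval_prefix. Qed.

Lemma left_endpoint_inX w : inX A B N (fst (interval A B N w)).
Proof.
  intros n; pose proof (interval_length_pos w).
  destruct (Nat.le_gt_cases n (length w)) as [Hle|Hgt].
  - exists (firstn n w); split; [rewrite length_firstn; lia|].
    apply in_interval_firstn; red; lra.
  - exists (w ++ repeat false (n - length w)); split; [rewrite length_app, repeat_length; lia|].
    pose proof (interval_length_pos (w ++ repeat false (n - length w))).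
    rewrite interval_zeros; lra.
Qed.

Lemma mass_aux_app k u v :
  mass_aux p q N k (u ++ v) = mass_aux p q N k u * mass_aux p q N (k + length u) v.
Proof.
  revert k; induction u as [|b u IH]; intros k; simpl.
  - rewrite Nat.add_0_r; ring.
  - rewrite IH; replace (k + S (length u))%nat with (S k + length u)%nat by lia; ring.
Qed.

Lemma mass_aux_bounds k w : Rmin p q ^ length w <= mass_aux p q N k w <= 1.
Proof.
  revert k; induction w as [|b w IH]; intros k; simpl; [lra|].
  destruct (IH (S k)); destruct (weight_bounds k).
  pose proof Rmin_weights_pos; pose proof (pow_le (Rmin p q) (length w)).
  assert (Rmin p q <= 1 / 2) by (pose proof (Rmin_l p q); lra).
  destruct b; split; nra.
Qed.

Lemma mass_aux_pos k w : 0 < mass_aux p q N k w.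
Proof.
  pose proof (pow_lt _ (length w) Rmin_weights_pos); pose proof (mass_aux_bounds k w); lra.
Qed.

Lemma sum_mass_aux k n : sum_list (mass_aux p q N k) (words n) = 1.
Proof.
  revert k; induction n as [|n IH]; intros k; [simpl; ring|].
  rewrite sum_words_S, <- (IH (S k)); apply sum_list_ext; intros w _; simpl; ring.
Qed.

Definition log_Z (s : R) (k : nat) : R :=
  ln (Rpower (weight p q N k) s + Rpower (1 - weight p q N k) s).

Lemma sum_mass_aux_pow s k n :
  sum_list (fun w => Rpower (mass_aux p q N k w) s) (words n) = exp (sum_from (log_Z s) k n).
Proof.
  revert k; induction n as [|n IH]; intros k.
  - simpl; unfold Rpower; rewrite ln_1, Rmult_0_r, exp_0; ring.
  - rewrite sum_words_S; simpl sum_from; rewrite exp_plus, <- IH, <- sum_list_scal.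
    unfold log_Z; rewrite exp_ln by (unfold Rpower; pose proof (exp_pos (s * ln (weight p q N k)));
                                      pose proof (exp_pos (s * ln (1 - weight p q N k))); lra).
    apply sum_list_ext; intros w _; simpl.
    pose proof (mass_aux_pos (S k) w); destruct (weight_bounds k); pose proof Rmin_weights_pos.
    rewrite <- !Rpower_mult_distr by lra; ring.
Qed.

Lemma mass_pos w : 0 < mass p q N w.
Proof. apply mass_aux_pos. Qed.

Lemma mass_app_bounds u v :
  Rmin p q ^ length v * mass p q N u <= mass p q N (u ++ v) <= mass p q N u.
Proof.
  unfold mass; rewrite mass_aux_app.
  destruct (mass_aux_bounds (1 + length u) v); pose proof (mass_aux_pos 1 u); nra.
Qed.

Lemma ln_mass_app u v :
  ln (mass p q N u) + INR (length v) * ln (Rmin p q) <= ln (mass p q N (u ++ v))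
    <= ln (mass p q N u).
Proof.
  pose proof (mass_pos u); pose proof (pow_lt _ (length v) Rmin_weights_pos).
  destruct (mass_app_bounds u v).
  rewrite <- ln_pow, <- ln_mult by (auto || apply Rmin_weights_pos).
  split; apply ln_le_mono; nra.
Qed.

(** * Measures of balls and the packing sums S_r *)

Definition cover_mass (c r : R) (w : list bool) : R :=
  let x := fst (interval A B N w) in
  let l := snd (interval A B N w) in
  if Rle_dec x (c + r) then if Rle_dec (c - r) (x + l) then mass p q N w else 0 else 0.

Lemma ball_approx_sum n c r :
  ball_approx A B p q N n c r = sum_list (cover_mass c r) (words n).
Proof. unfold ball_approx; now rewrite sum_list_fold. Qed.

Lemma cover_mass_bounds c r w : 0 <= cover_mass c r w <= mass p q N w.
Proof.
  pose proof (mass_aux_pos 1 w); unfold cover_mass, mass in *.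
  destruct Rle_dec; [destruct Rle_dec|]; lra.
Qed.

Lemma cover_mass_meet c r w :
  fst (interval A B N w) <= c + r -> c - r <= fst (interval A B N w) + snd (interval A B N w) ->
  cover_mass c r w = mass p q N w.
Proof. intros; unfold cover_mass; destruct Rle_dec; [destruct Rle_dec|]; tauto. Qed.

Lemma cover_mass_far u w c r :
  in_interval u c -> length w = length u -> w <> u -> r < (B - 2) * ell (length u) ->
  cover_mass c r w = 0.
Proof.
  intros [Hc1 Hc2] Hlen Hwu Hr; unfold cover_mass; cbv zeta.
  rewrite !interval_length, Hlen in *; pose proof (ell_pos (length u)).
  destruct (interval_gap u w (eq_sym Hlen) (not_eq_sym Hwu));
    destruct Rle_dec; try destruct Rle_dec; lra.
Qed.

Lemma ball_approx_ge c r v n :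
  c - r <= fst (interval A B N v) -> fst (interval A B N v) + snd (interval A B N v) <= c + r ->
  mass p q N v <= ball_approx A B p q N n c r.
Proof.
  intros H1 H2; rewrite ball_approx_sum.
  assert (Hnn : forall w, 0 <= cover_mass c r w) by (intros; apply cover_mass_bounds).
  destruct (Nat.le_gt_cases (length v) n) as [Hle|Hlt].
  - replace n with (length v + (n - length v))%nat by lia; rewrite sum_words_add.
    eapply Rle_trans; [|apply sum_list_In_le with (a := v); [|now apply In_words]].
    + rewrite <- (Rmult_1_r (mass p q N v)), <- (sum_mass_aux (1 + length v) (n - length v)).
      rewrite <- sum_list_scal; apply Req_le, sum_list_ext; intros t _.
      destruct (interval_nested v t); pose proof (interval_length_pos (v ++ t)).
      rewrite cover_mass_meet by lra; unfold mass; now rewrite mass_aux_app.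
    + intros; apply sum_list_nonneg; auto.
  - rewrite <- (firstn_skipn n v) at 1.
    eapply Rle_trans; [|apply sum_list_In_le with (a := firstn n v); auto].
    + destruct (interval_nested (firstn n v) (skipn n v)); rewrite firstn_skipn in *.
      pose proof (interval_length_pos v); rewrite cover_mass_meet by lra.
      destruct (mass_app_bounds (firstn n v) (skipn n v)); now rewrite firstn_skipn in *.
    + apply In_words; rewrite length_firstn; lia.
Qed.

Lemma ball_approx_le c r u n : length u = n ->
  (forall w, length w = n -> w <> u -> cover_mass c r w = 0) ->
  ball_approx A B p q N n c r <= mass p q N u.
Proof.
  intros Hu Hw; rewrite ball_approx_sum.
  eapply Rle_trans; [apply (sum_list_single _ _ u) | apply cover_mass_bounds].
  - apply NoDup_words.
  - intros w Hw' Hne; apply Hw; auto; now apply In_words.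
  - apply cover_mass_bounds.
Qed.

Lemma mu_ball_le_ball_approx c r n : mu_ball A B p q N c r <= ball_approx A B p q N n c r.
Proof.
  apply Rinf_le with 0; [now exists n|].
  intros x [m ->]; rewrite ball_approx_sum; apply sum_list_nonneg.
  intros; apply cover_mass_bounds.
Qed.

(* The ball contains I_w and misses every level-n0 interval other than I_(firstn n0 w), since
   those lie (B - 2) * ell n0 away. *)
Lemma mu_ball_bounds c r w n0 :
  in_interval w c -> (n0 <= length w)%nat -> ell (length w) <= r -> r < (B - 2) * ell n0 ->
  mass p q N w <= mu_ball A B p q N c r <= mass p q N (firstn n0 w).
Proof.
  intros Hc Hn Hlo Hhi; split.
  - apply Rinf_ge; [eexists; now exists 0%nat|].
    intros x [n ->]; destruct Hc; rewrite interval_length in *.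
    apply ball_approx_ge; rewrite ?interval_length; lra.
  - assert (Hu : length (firstn n0 w) = n0) by (rewrite length_firstn; lia).
    eapply Rle_trans; [apply (mu_ball_le_ball_approx c r n0)|].
    apply ball_approx_le; auto; intros w' Hw' Hne.
    apply cover_mass_far with (firstn n0 w); try congruence.
    now apply in_interval_firstn.
Qed.

Variables (s : R) (D : nat).

(* At level n, distinct level-n intervals are more than 2 r apart, while every r-ball centred in
   X contains a level-(n + D) interval. *)
Definition at_level (n : nat) (r : R) : Prop := ell (n + D) <= r < (B - 2) / 2 * ell n.

Definition depth_loss : R := - INR D * ln (Rmin p q).

Lemma mu_ball_mass_close c r w n :
  in_interval w c -> length w = (n + D)%nat -> at_level n r ->
  0 < mu_ball A B p q N c r /\
  Rabs (ln (mu_ball A B p q N c r) - ln (mass p q N w)) <= depth_loss /\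
  Rabs (ln (mu_ball A B p q N c r) - ln (mass p q N (firstn n w))) <= depth_loss.
Proof.
  intros Hc Hw [Hlo Hhi].
  assert (Hhi' : r < (B - 2) * ell n) by (pose proof (ell_pos n); nra).
  destruct (mu_ball_bounds c r w n Hc ltac:(lia) ltac:(now rewrite Hw) Hhi') as [H1 H2].
  pose proof (mass_pos w); pose proof (mass_pos (firstn n w)).
  assert (L1 : ln (mass p q N w) <= ln (mu_ball A B p q N c r))
    by (apply ln_le_mono; lra).
  assert (L2 : ln (mu_ball A B p q N c r) <= ln (mass p q N (firstn n w)))
    by (apply ln_le_mono; lra).
  pose proof (ln_mass_app (firstn n w) (skipn n w)) as L3.
  rewrite firstn_skipn, length_skipn, Hw in L3; replace (n + D - n)%nat with D in L3 by lia.
  unfold depth_loss; repeat split; try apply Rabs_le_between; lra.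
Qed.

Definition packing_sum (r v : R) : Prop :=
  exists cs : list R,
    (forall c, In c cs -> inX A B N c) /\
    ForallOrdPairs (fun x y => 2 * r < Rabs (x - y)) cs /\
    v = fold_right Rplus 0 (map (fun c => Rpower (mu_ball A B p q N c r) s) cs).

Lemma packing_sum_le n r v : at_level n r -> packing_sum r v ->
  v <= exp (Rabs s * depth_loss) * exp (sum_from (log_Z s) 1 (n + D)).
Proof.
  intros Hr [cs [Hin [Hsep ->]]]; rewrite sum_list_fold.
  set (word_of c := epsilon (inhabits nil) (fun w => length w = (n + D)%nat /\ in_interval w c)).
  assert (Hword : forall c, In c cs ->
            length (word_of c) = (n + D)%nat /\ in_interval (word_of c) c).
  { intros c Hc; apply epsilon_spec, (Hin c Hc). }
  eapply Rle_trans with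
    (sum_list (fun c => exp (Rabs s * depth_loss) * Rpower (mass p q N (word_of c)) s) cs).
  - apply sum_list_le; intros c Hc; destruct (Hword c Hc) as [Hl Hi].
    destruct (mu_ball_mass_close c r (word_of c) n Hi Hl Hr) as [Hpos [Hclose _]].
    now apply Rpower_le_of_ln_close, Hclose; auto using mass_pos.
  - rewrite sum_list_scal; apply Rmult_le_compat_l; [apply Rlt_le, exp_pos|].
    rewrite <- (sum_list_map (fun w => Rpower (mass p q N w) s) word_of), <- sum_mass_aux_pow.
    apply sum_list_incl.
    + apply NoDup_map_ForallOrdPairs with (1 := Hsep); intros x y Hx Hy Hxy E.
      destruct (Hword x Hx) as [Hlx [Hx1 Hx2]]; destruct (Hword y Hy) as [Hly [Hy1 Hy2]].
      rewrite E, interval_length, Hly in *; destruct Hr.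
      pose proof (ell_pos (n + D)); revert Hxy; split_Rabs; lra.
    + intros w Hw; apply in_map_iff in Hw as [c [<- Hc]]; apply In_words, Hword, Hc.
    + intros w _; apply Rlt_le, exp_pos.
Qed.

Lemma packing_sum_ge n r : at_level n r -> exists v, packing_sum r v /\
  exp (- (Rabs s * depth_loss)) * exp (sum_from (log_Z s) 1 n) <= v.
Proof.
  intros Hr.
  set (cs := map (fun w => fst (interval A B N w)) (words n)).
  exists (fold_right Rplus 0 (map (fun c => Rpower (mu_ball A B p q N c r) s) cs)); split.
  - exists cs; repeat split.
    + intros c Hc; apply in_map_iff in Hc as [w [<- _]]; apply left_endpoint_inX.
    + apply ForallOrdPairs_map; [apply NoDup_words|]; intros u v Hu Hv Huv.
      apply In_words in Hu, Hv.
      destruct Hr; pose proof (ell_pos n).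
      apply Rlt_le_trans with ((B - 1) * ell n); [nra|].
      destruct (interval_gap u v ltac:(congruence) Huv); rewrite Hu in *; split_Rabs; lra.
  - unfold cs; rewrite sum_list_fold, sum_list_map, <- sum_mass_aux_pow, <- sum_list_scal.
    apply sum_list_le; intros u Hu; apply In_words in Hu.
    set (w := u ++ repeat false D).
    assert (Hw : length w = (n + D)%nat) by (unfold w; rewrite length_app, repeat_length; lia).
    assert (Hfirst : firstn n w = u).
    { unfold w; rewrite firstn_app, <- Hu, firstn_all, Nat.sub_diag, app_nil_r; reflexivity. }
    assert (Hc : in_interval w (fst (interval A B N u))).
    { pose proof (interval_length_pos w); red; unfold w in *; rewrite interval_zeros; lra. }
    destruct (mu_ball_mass_close _ r w n Hc Hw Hr) as [Hpos [_ Hclose]]; rewrite Hfirst in Hclose.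
    rewrite Rabs_minus_sym in Hclose.
    pose proof (Rpower_le_of_ln_close _ _ _ s (mass_pos u) Hpos Hclose).
    rewrite exp_Ropp; unfold mass in *.
    apply (Rmult_le_reg_l (exp (Rabs s * depth_loss))); [apply exp_pos|].
    rewrite <- Rmult_assoc, Rinv_r, Rmult_1_l by apply exp_neq_0; lra.
Qed.

Lemma S_r_bounds n r : at_level n r ->
  exp (- (Rabs s * depth_loss)) * exp (sum_from (log_Z s) 1 n)
    <= S_r A B p q N r s <=
  exp (Rabs s * depth_loss) * exp (sum_from (log_Z s) 1 (n + D)).
Proof.
  intros Hr; change (S_r A B p q N r s) with (Rsup (packing_sum r)); split.
  - destruct (packing_sum_ge n r Hr) as [v [Hv Hle]].
    eapply Rle_trans; [apply Hle | apply Rsup_ge; auto].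
    eexists; intros x Hx; apply (packing_sum_le n r x Hr Hx).
  - apply Rsup_le; [exists 0, nil; split; [intros c [] | split; [constructor | reflexivity]]|].
    intros x Hx; apply (packing_sum_le n r x Hr Hx).
Qed.

(** * The exponent log S_r / log r *)

Definition beta_at (k : nat) : R := beta (ratio A B N k) (weight p q N k) s.

Definition beta_bound : R := Rabs (beta A p s) + Rabs (beta B q s).

Lemma log_Z_eq k : log_Z s k = - (beta_at k * log_ratio k).
Proof.
  pose proof (log_ratio_pos k); unfold beta_at, beta, log_Z, log_ratio in *; field; lra.
Qed.

Lemma beta_at_typeA k : typeA N k -> beta_at k = beta A p s.
Proof.
  intros H; unfold beta_at, ratio, weight.
  destruct excluded_middle_informative; [reflexivity | contradiction].
Qed.

Lemma beta_at_not_typeA k : ~ typeA N k -> beta_at k = beta B q s.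
Proof.
  intros H; unfold beta_at, ratio, weight.
  destruct excluded_middle_informative; [contradiction | reflexivity].
Qed.

Lemma beta_at_between k :
  Rmin (beta A p s) (beta B q s) <= beta_at k <= Rmax (beta A p s) (beta B q s).
Proof.
  pose proof (Rmin_l (beta A p s) (beta B q s)); pose proof (Rmin_r (beta A p s) (beta B q s)).
  pose proof (Rmax_l (beta A p s) (beta B q s)); pose proof (Rmax_r (beta A p s) (beta B q s)).
  destruct (classic (typeA N k)); [rewrite beta_at_typeA | rewrite beta_at_not_typeA]; auto; lra.
Qed.

Lemma Rabs_beta_at_le k : Rabs (beta_at k) <= beta_bound.
Proof. apply Rabs_le_of_between, beta_at_between. Qed.

Lemma Rabs_mul_log_ratio_le x X k : Rabs x <= X -> Rabs (x * log_ratio k) <= X * ln A.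
Proof.
  intros Hx; pose proof (log_ratio_pos k); pose proof (log_ratio_bounds k).
  rewrite Rabs_mult, (Rabs_pos_eq (log_ratio k)) by lra.
  apply Rmult_le_compat; auto using Rabs_pos; lra.
Qed.

Definition beta_sum (n : nat) : R := sum_from (fun k => beta_at k * log_ratio k) 1 n.

Definition mean_beta (n : nat) : R := beta_sum n / sum_from log_ratio 1 n.

Lemma sum_log_ratio_ge n : INR n * ln B <= sum_from log_ratio 1 n.
Proof. apply (sum_from_bounds log_ratio (ln B) (ln A) 1 n log_ratio_bounds). Qed.

Lemma sum_log_ratio_pos n : (1 <= n)%nat -> 0 < sum_from log_ratio 1 n.
Proof.
  intros Hn; pose proof (sum_log_ratio_ge n); pose proof ln_B_pos.
  pose proof (le_INR 1 n Hn); simpl in *; nra.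
Qed.

(* Also for n = 0, where both sides vanish because 0 / 0 = 0. *)
Lemma beta_sum_eq_mean n : beta_sum n = mean_beta n * sum_from log_ratio 1 n.
Proof.
  unfold mean_beta; destruct n as [|n]; [unfold beta_sum; simpl; ring|].
  pose proof (sum_log_ratio_pos (S n) ltac:(lia)); field; lra.
Qed.

Lemma mean_beta_between n : (1 <= n)%nat ->
  Rmin (beta A p s) (beta B q s) <= mean_beta n <= Rmax (beta A p s) (beta B q s).
Proof.
  intros Hn; pose proof (sum_log_ratio_pos n Hn).
  destruct (sum_from_weighted (fun k => beta_at k * log_ratio k) log_ratio
              (Rmin (beta A p s) (beta B q s)) (Rmax (beta A p s) (beta B q s)) 1 n).
  { intros j; destruct (beta_at_between j); pose proof (log_ratio_pos j); split; nra. }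
  unfold mean_beta, beta_sum; split; [apply Rle_div_of_mul_le | apply Rdiv_le_of_le_mul]; lra.
Qed.

Lemma mean_beta_close m n t : (m <= n)%nat -> (1 <= n)%nat ->
  (forall k, (m < k <= n)%nat -> beta_at k = t) ->
  Rabs (mean_beta n - t) <= INR m * ((beta_bound + Rabs t) * ln A) / (INR n * ln B).
Proof.
  intros Hmn Hn Hrun.
  assert (Htail : Rabs (beta_sum n - t * sum_from log_ratio 1 n)
                    <= INR m * ((beta_bound + Rabs t) * ln A)).
  { apply sum_from_tail; auto.
    - intros j; rewrite <- Rmult_minus_distr_r; apply Rabs_mul_log_ratio_le.
      pose proof (Rabs_beta_at_le j); pose proof (Rabs_triang (beta_at j) (- t)).
      rewrite Rabs_Ropp in *; unfold Rminus; lra.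
    - intros j Hj; rewrite (Hrun j) by lia; reflexivity. }
  pose proof (sum_log_ratio_ge n); pose proof (sum_log_ratio_pos n Hn).
  pose proof ln_B_pos; pose proof (le_INR 1 n Hn); simpl in *.
  rewrite beta_sum_eq_mean, <- Rmult_minus_distr_r, Rabs_mult, (Rabs_pos_eq (sum_from _ _ _))
    in Htail by lra.
  apply Rle_div_of_mul_le; [nra|].
  eapply Rle_trans; [apply Rmult_le_compat_l; [apply Rabs_pos | eassumption] | exact Htail].
Qed.

Lemma ln_S_r_close n r : at_level n r ->
  Rabs (ln (S_r A B p q N r s) + beta_sum n) <= Rabs s * depth_loss + INR D * (beta_bound * ln A).
Proof.
  intros Hr; destruct (S_r_bounds n r Hr) as [Hlo Hhi]; rewrite <- exp_plus in Hlo, Hhi.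
  pose proof (exp_pos (- (Rabs s * depth_loss) + sum_from (log_Z s) 1 n)).
  apply ln_le_mono in Hhi; [|lra]; apply ln_le_mono in Hlo; [|apply exp_pos].
  rewrite ln_exp, sum_from_add in Hhi; rewrite ln_exp in Hlo.
  assert (Hsum : forall k n,
            sum_from (log_Z s) k n = - sum_from (fun k => beta_at k * log_ratio k) k n).
  { intros; rewrite <- sum_from_opp; apply sum_from_ext, log_Z_eq. }
  rewrite !Hsum in *; fold (beta_sum n) in *.
  destruct (sum_from_bounds (fun k => beta_at k * log_ratio k)
              (- (beta_bound * ln A)) (beta_bound * ln A) (1 + n) D).
  { intros j; apply Rabs_le_between, Rabs_mul_log_ratio_le, Rabs_beta_at_le. }
  apply Rabs_le_between; lra.
Qed.

Lemma ln_r_close n r : at_level n r ->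
  Rabs (- ln r - sum_from log_ratio 1 n) <= INR D * ln A + Rabs (ln ((B - 2) / 2)).
Proof.
  intros [Hlo Hhi]; pose proof (ell_pos (n + D)); pose proof (ell_pos n).
  apply ln_increasing in Hhi; [|lra]; apply ln_le_mono in Hlo; auto.
  unfold ell in Hlo, Hhi; rewrite ln_mult, ln_exp in Hhi by (lra || apply exp_pos).
  rewrite ln_exp, sum_from_add in Hlo.
  destruct (sum_from_bounds log_ratio (ln B) (ln A) (1 + n) D log_ratio_bounds).
  pose proof ln_B_pos; pose proof (pos_INR D).
  apply Rabs_le_between; split_Rabs; nra.
Qed.

Lemma uniform_estimate : exists E, forall n r, (1 <= n)%nat -> at_level n r -> r < 1 ->
  Rabs (ln (S_r A B p q N r s) / ln r - mean_beta n) <= E / (- ln r).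
Proof.
  set (K0 := Rabs s * depth_loss + INR D * (beta_bound * ln A)).
  set (K1 := INR D * ln A + Rabs (ln ((B - 2) / 2))).
  assert (HK1 : 0 <= K1).
  { unfold K1; pose proof (Rabs_pos (ln ((B - 2) / 2))); pose proof ln_A_pos.
    pose proof (pos_INR D); nra. }
  exists (K0 + beta_bound * K1); intros n r Hn Hr Hr1.
  assert (HY : 0 < - ln r).
  { pose proof (ell_pos (n + D)); destruct Hr; pose proof (ln_neg r); lra. }
  replace (ln (S_r A B p q N r s) / ln r) with (- ln (S_r A B p q N r s) / - ln r) by (field; lra).
  eapply Rle_trans.
  - apply quotient_close with (a := beta_sum n) (b := sum_from log_ratio 1 n) (K0 := K0) (K1 := K1);
      auto using beta_sum_eq_mean, ln_r_close.
    replace (- ln (S_r A B p q N r s) - beta_sum n) with (- (ln (S_r A B p q N r s) + beta_sum n))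
      by ring.
    rewrite Rabs_Ropp; apply ln_S_r_close, Hr.
  - pose proof (Rabs_le_of_between _ _ _ (mean_beta_between n Hn)); fold beta_bound in *.
    unfold Rdiv; apply Rmult_le_compat_r; [apply Rlt_le, Rinv_0_lt_compat; lra | nra].
Qed.

Lemma ell_small rho : 0 < rho -> exists X, forall n, X <= INR n -> ell n < rho.
Proof.
  intros Hrho; pose proof ln_B_pos; exists ((- ln rho + 1) / ln B); intros n Hn.
  eapply Rle_lt_trans; [apply (ell_add_le 0 n)|].
  rewrite ell_0, Rmult_1_l, <- (exp_ln rho) by lra; apply exp_increasing.
  apply Rmult_le_compat_r with (r := ln B) in Hn; [|lra].
  unfold Rdiv in Hn; rewrite Rmult_assoc, Rinv_l in Hn; lra.
Qed.

Hypothesis hD : exp (- INR D * ln B) <= (B - 2) / (2 * A).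

Lemma exists_level r : 0 < r < (B - 2) / 2 * ell 1 -> exists n, (1 <= n)%nat /\ at_level n r.
Proof.
  intros [Hr0 Hr1].
  destruct (ell_small (2 * r / (B - 2))) as [X HX]; [apply Rdiv_lt_0_compat; lra|].
  destruct (INR_unbounded X) as [m Hm].
  assert (Hnot : ~ r < (B - 2) / 2 * ell (S m)).
  { assert (ell (S m) < 2 * r / (B - 2)) by (apply HX; rewrite S_INR; lra).
    apply Rle_not_lt; apply Rmult_lt_compat_l with (r := (B - 2) / 2) in H; [|lra].
    replace ((B - 2) / 2 * (2 * r / (B - 2))) with r in H by (field; lra); lra. }
  destruct (last_before (fun n => r < (B - 2) / 2 * ell n) 1 (S m) ltac:(lia) Hr1 Hnot)
    as [n [Hn [Hlt Hge]]].
  exists n; repeat split; auto.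
  apply Rnot_lt_le in Hge.
  assert (HA : ell n / A <= ell (S n)).
  { pose proof (ell_add_ge n 1) as H; rewrite Nat.add_1_r in H.
    replace (- INR 1 * ln A) with (- ln A) in H by (simpl; ring).
    rewrite exp_Ropp, exp_ln in H by lra; exact H. }
  assert (HD : ell (n + D) <= ell n * ((B - 2) / (2 * A)))
    by (pose proof (ell_add_le n D); pose proof (ell_pos n); nra).
  replace (ell n * ((B - 2) / (2 * A))) with ((B - 2) / 2 * (ell n / A)) in HD by (field; lra).
  pose proof (Rmult_le_compat_l ((B - 2) / 2) _ _ ltac:(lra) HA); lra.
Qed.

Lemma at_level_radius n : at_level n ((B - 2) / (2 * A) * ell n).
Proof.
  pose proof (ell_add_le n D); pose proof (ell_pos n); split; [nra|].
  apply Rmult_lt_compat_r; [auto|].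
  unfold Rdiv; apply Rmult_lt_compat_l; [lra|].
  apply Rinv_lt_contravar; nra.
Qed.

Lemma level_radius_small rho : 0 < rho ->
  exists X, forall n, X <= INR n -> 0 < (B - 2) / (2 * A) * ell n < rho.
Proof.
  intros Hrho; assert (Hc : 0 < (B - 2) / (2 * A)) by (apply Rdiv_lt_0_compat; lra).
  destruct (ell_small (rho / ((B - 2) / (2 * A)))) as [X HX]; [now apply Rdiv_lt_0_compat|].
  exists X; intros n Hn; specialize (HX n Hn); pose proof (ell_pos n); split; [nra|].
  apply Rmult_lt_compat_l with (r := (B - 2) / (2 * A)) in HX; auto.
  now replace ((B - 2) / (2 * A) * (rho / ((B - 2) / (2 * A)))) with rho in HX by (field; lra).
Qed.

Lemma tau_between eps : 0 < eps -> exists delta, 0 < delta /\ forall r, 0 < r < delta ->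
  Rmin (beta A p s) (beta B q s) - eps < ln (S_r A B p q N r s) / ln r <
  Rmax (beta A p s) (beta B q s) + eps.
Proof.
  intros Heps; destruct uniform_estimate as [E HE]; pose proof (ell_pos 1).
  exists (Rmin (Rmin 1 ((B - 2) / 2 * ell 1)) (exp (- ((Rabs E + 1) / eps)))); split.
  { repeat apply Rmin_glb_lt; try apply exp_pos; nra. }
  intros r [Hr0 Hr]; apply Rmin_Rgt in Hr as [Hr Hr3]; apply Rmin_Rgt in Hr as [Hr1 Hr2].
  destruct (exists_level r ltac:(lra)) as [n [Hn Hlevel]].
  pose proof (HE n r Hn Hlevel Hr1) as Hclose; apply Rabs_le_between in Hclose.
  pose proof (div_neg_ln_lt E eps r Heps ltac:(lra)); pose proof (mean_beta_between n Hn); lra.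
Qed.

Lemma tau_approaches t : long_runs (fun k => beta_at k = t) ->
  forall eps, 0 < eps -> forall delta, 0 < delta ->
  exists r, 0 < r < delta /\ Rabs (ln (S_r A B p q N r s) / ln r - t) < eps.
Proof.
  intros Hruns eps Heps delta Hdelta; destruct uniform_estimate as [E HE].
  set (C := (beta_bound + Rabs t) * ln A).
  set (K := 2 * C / (eps * ln B)).
  destruct (level_radius_small (Rmin (Rmin 1 delta) (exp (- ((Rabs E + 1) / (eps / 2))))))
    as [X HX]; [repeat apply Rmin_glb_lt; try apply exp_pos; lra|].
  destruct (Hruns (1 + Rabs X + Rabs K)) as [m [n [Hmn [Hn [Hm Hrun]]]]].
  pose proof (Rle_abs X); pose proof (Rle_abs K); pose proof (Rabs_pos X); pose proof (Rabs_pos K).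
  pose proof (pos_INR m); pose proof ln_B_pos.
  assert (Hn1 : (1 <= n)%nat) by (apply INR_le; simpl; lra).
  set (r := (B - 2) / (2 * A) * ell n).
  destruct (HX n ltac:(lra)) as [Hr0 Hr]; fold r in Hr0, Hr.
  apply Rmin_Rgt in Hr as [Hr Hr3]; apply Rmin_Rgt in Hr as [Hr1 Hr2].
  exists r; split; [lra|].
  pose proof (HE n r Hn1 (at_level_radius n) Hr1) as Hest.
  pose proof (div_neg_ln_lt E (eps / 2) r ltac:(lra) ltac:(lra)) as Herr.
  pose proof (mean_beta_close m n t Hmn Hn1 Hrun) as Hmean; fold C in Hmean.
  assert (Hratio : INR m * C / (INR n * ln B) <= eps / 2).
  { apply Rdiv_le_of_le_mul; [nra|].
    replace (INR m * C) with (eps * ln B / 2 * (K * INR m)) by (unfold K; field; lra).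
    apply Rle_trans with (eps * ln B / 2 * INR n); [apply Rmult_le_compat_l; nra | right; field]. }
  pose proof (Rabs_triang (ln (S_r A B p q N r s) / ln r - mean_beta n) (mean_beta n - t)) as Htri.
  replace (ln (S_r A B p q N r s) / ln r - mean_beta n + (mean_beta n - t))
    with (ln (S_r A B p q N r s) / ln r - t) in Htri by ring.
  lra.
Qed.

End Cantor.

Theorem mainTheorem8 (A B p q : R) (N : nat -> nat)
  (hAB : B < A) (hB : 2 < B)
  (hp : 0 < p <= 1 / 2) (hq : 0 < q <= 1 / 2)
  (hN0 : N 0%nat = 0%nat)
  (hNinc : forall i : nat, (N i < N (S i))%nat)
  (hNgrowth : cv_infty (fun i : nat => INR (N (S i)) / INR (N i)))
  (hstand : - ln p / ln A < - ln (1 - q) / ln B) :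
  forall s : R,
    is_liminf0 (fun r => ln (S_r A B p q N r s) / ln r)
      (Rmin (beta A p s) (beta B q s)) /\
    is_limsup0 (fun r => ln (S_r A B p q N r s) / ln r)
      (Rmax (beta A p s) (beta B q s)).
Proof.
  intros s.
  destruct (exists_depth B ((B - 2) / (2 * A))) as [D hD]; [lra | apply Rdiv_lt_0_compat; lra|].
  assert (HA := tau_approaches A B p q N hB hAB hp hq s D hD (beta A p s)
    (long_runs_impl _ _ (beta_at_typeA A B p q N s) (typeA_runs N hNinc hNgrowth))).
  assert (HB := tau_approaches A B p q N hB hAB hp hq s D hD (beta B q s)
    (long_runs_impl _ _ (beta_at_not_typeA A B p q N s) (not_typeA_runs N hNinc hNgrowth))).
  apply liminf_limsup_of_bounds.
  - exact (tau_between A B p q N hB hAB hp hq s D hD).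
  - now apply Rmin_case.
  - now apply Rmax_case.
Qed.
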